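(* Fix $p$ and $q$, and let $\widetilde{\mathrm{gr}}$ refer to the absolute $\mathbb{Q}$-grading on $\widehat{HF}(-L(p,q))$. For $0\leq i<p$, $$\widetilde{\mathrm{gr}}(x_{i+q\!\!\mod {p}}) - \widetilde{\mathrm{gr}}(x_i)={1\over p}(p-1-2i).$$
   Context: $p>q$ are relatively prime positive integers. $-L(p,q)$ has the pointed Heegaard diagram with $\Sigma$ the torus $[0,1]\times[0,1]$ with edges identified, $\alpha$ the horizontal circle $y=1/2$, $\beta$ a circle of slope $-p/q$, and $z$ a point below $y=1/2$. The $p$ points of $\alpha\cap\beta$ are labeled $x_0,\ldots,x_{p-1}$ from left to right along $\alpha$, where $x_0$ is the upper right vertex of the region containing $z$ (regions $D_0,\dots,D_{p-1}$ labeled left to right with $z\in D_0$). Each $x_i$ is in a distinct $\mathrm{Spin}^c$ structure and $\widehat{CF}=\widehat{HF}(-L(p,q))$. $\widetilde{\mathrm{gr}}$ is Ozsváth–Szabó's absolute $\mathbb{Q}$-grading, which satisfies, for $0\le i<p+q$, $\widetilde{\mathrm{gr}}_{p,q}(x_{i \bmod p})=\frac{pq-(2i+1-p-q)^2}{4pq}-\widetilde{\mathrm{gr}}_{q,p\bmod q}(x_{i\bmod q})$. *)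

From mathcomp Require Import all_boot all_order all_algebra.
Set Implicit Arguments. Unset Strict Implicit. Unset Printing Implicit Defensive.
Import Order.TTheory GRing.Theory Num.Theory.
Local Open Scope ring_scope.

(* Ozsvath-Szabo absolute Q-grading of the generator x_i of HF^(-L(p,q)),
   defined by the Ozsvath-Szabo recursion
     gr_{p,q}(x_i) = (pq - (2i+1-p-q)^2)/(4pq) - gr_{q, p mod q}(x_{i mod q})
   (used here for 0 <= i < p), with base case gr_{1,0}(x_0) = 0 (S^3).
   [fuel] is a recursion bound; q strictly decreases along the recursion. *)
Fixpoint gr_aux (fuel p q i : nat) : rat :=
  match fuel with
  | 0%N => 0
  | f.+1 =>
    if q == 0%N then 0
    else ((p * q)%:R - (((2 * i + 1)%:Z - p%:Z - q%:Z) ^+ 2)%:~R) / (4 * p * q)%:R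
         - gr_aux f q (p %% q) (i %% q)
  end.

Definition grt (p q i : nat) : rat := gr_aux q.+1 p q i.

(** The recursion for [grt] expresses gr~_{p,q} through gr~_{q, p mod q}
    plus an explicit quadratic term.  Shifting [i] by [q] either stays below
    [p], in which case [i mod q] is unchanged and only the quadratic term
    moves, by exactly [(p - 1 - 2i)/p]; or it wraps around to [j = i + q - p],
    in which case [i mod q = (j + p mod q) mod q] and the induction hypothesis
    for the pair [(q, p mod q)] supplies the shift of the recursive term.  The
    induction bottoms out at [(1, 0)], where both gradings vanish. *)

From mathcomp Require Import all_boot all_order all_algebra.
From mathcomp Require Import ring.
Import Order.TTheory GRing.Theory Num.Theory.
Local Open Scope ring_scope.

Lemma gr_aux_fuel f1 f2 p q i :
  (q < f1)%N -> (q < f2)%N -> gr_aux f1 p q i = gr_aux f2 p q i.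
Proof.
elim: f1 f2 p q i => [|f1 IH] [|f2] p q i //= lt_q_f1 lt_q_f2.
case: eqP => // /eqP q_neq0; rewrite -lt0n in q_neq0.
by congr (_ - _); apply: IH; apply: leq_trans (ltn_pmod _ q_neq0) _.
Qed.

Definition gr_term {R : numFieldType} (p q i : R) : R :=
  (p * q - (2 * i + 1 - p - q) ^+ 2) / (4 * p * q).

Section GrTerm.
Context {R : numFieldType} {p q : R}.
Hypotheses (p_neq0 : p != 0) (q_neq0 : q != 0).

Lemma gr_term_shift i : gr_term p q (i + q) - gr_term p q i = (p - 1 - 2 * i) / p.
Proof. by rewrite /gr_term; field; rewrite p_neq0 q_neq0. Qed.

Lemma gr_term_wrap j :
  gr_term p q j - gr_term p q (j + p - q) + (q - 1 - 2 * j) / q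
  = (p - 1 - 2 * (j + p - q)) / p.
Proof. by rewrite /gr_term; field; rewrite p_neq0 q_neq0. Qed.

End GrTerm.

Lemma grt_rec p q i : (0 < q)%N ->
  grt p q i = gr_term p%:R q%:R i%:R - grt q (p %% q) (i %% q).
Proof.
move=> q_gt0; rewrite /grt /= eqn0Ngt q_gt0 /=.
rewrite (@gr_aux_fuel q (p %% q).+1) ?ltn_pmod //; congr (_ - _).
rewrite /gr_term !natrM rmorphXn /= !rmorphB /= rmorphD /=.
by rewrite !pmulrn PoszM intrD intrM.
Qed.

Lemma grt_0 p i : grt p 0 i = 0.
Proof. by []. Qed.

Lemma grt_shift p q i : (q < p)%N -> coprime p q -> (i < p)%N ->
  grt p q ((i + q) %% p) - grt p q i = (p%:R - 1 - 2 * i%:R) / p%:R.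
Proof.
elim/ltn_ind: p q i => p IH q i lt_qp co_pq lt_ip.
have [q0|q_gt0] := posnP q.
  subst q; move: co_pq; rewrite /coprime gcdn0 => /eqP p1; subst p.
  by move: lt_ip; rewrite ltnS leqn0 => /eqP ->; rewrite !grt_0 subrr; field.
have p_neq0 : p%:R != 0 :> rat by rewrite pnatr_eq0 -lt0n (ltn_trans q_gt0).
have q_neq0 : q%:R != 0 :> rat by rewrite pnatr_eq0 -lt0n.
rewrite !(grt_rec p _ _ q_gt0).
have [lt_iq_p|] := ltnP (i + q) p.
  rewrite modn_small // modnDr natrD -(gr_term_shift p_neq0 q_neq0).
  by rewrite opprB addrA subrK.
move=> le_p_iq; set j := (i + q - p)%N.
have def_iq : (p + j = i + q)%N by rewrite subnKC.
have lt_jq : (j < q)%N by rewrite ltn_subLR ?ltn_add2r // -def_iq leq_addl.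
have i_eq : i%:R = j%:R + p%:R - q%:R :> rat.
  by apply: (addIr q%:R); rewrite subrK -!natrD -def_iq addnC.
have i_mod : (i %% q = (j + p %% q) %% q)%N by rewrite modnDmr addnC def_iq modnDr.
have co_q_pq : coprime q (p %% q) by rewrite coprime_modr coprime_sym.
have shift_q := IH q lt_qp (p %% q)%N j (ltn_pmod _ q_gt0) co_q_pq lt_jq.
rewrite -def_iq modnDl (modn_small (ltn_trans lt_jq lt_qp)) (modn_small lt_jq).
rewrite i_mod i_eq -(gr_term_wrap p_neq0 q_neq0) -shift_q.
ring.
Qed.

Theorem corollary5p2 (p q : nat) (hq : (0 < q)%N) (hpq : (q < p)%N)
  (hcop : coprime p q) (i : nat) (hi : (i < p)%N) :
  grt p q ((i + q) %% p) - grt p q i = (p%:R - 1 - 2 * i%:R) / p%:R.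
Proof. exact: grt_shift. Qed.
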